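(* Let $\partial_1,\partial_2$ be nonzero homogeneous locally nilpotent derivations of fiber type on $A$. Then $\partial_1+\partial_2$ is locally nilpotent if and only if $[\partial_1,\partial_2]$ is locally nilpotent.
   Context: Let $\mathbf k$ be an algebraically closed field of characteristic zero, $\mathbb T\cong(\mathbf k^\times)^n$ an algebraic torus with character lattice $M$. Let $X$ be a normal affine variety with an effective $\mathbb T$-action, $A=\mathbf k[X]$ with the induced $M$-grading $A=\bigoplus_{m\in M}A_m\chi^m$, $A_m\subseteq\mathbf k(X)^{\mathbb T}$, $K=\operatorname{Frac}A$. A derivation $\partial$ of $A$ is homogeneous of degree $e\in M$ if $\partial(A_m\chi^m)\subseteq A_{m+e}\chi^{m+e}$ for all $m$; it is locally nilpotent if every element of $A$ is killed by some power of $\partial$; a homogeneous locally nilpotent derivation is of fiber type if its unique extension to $K$ annihilates $\mathbf k(X)^{\mathbb T}$. *)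

From HB Require Import structures.
From mathcomp Require Import all_boot all_order all_algebra.
From mathcomp Require Import fraction.
Set Implicit Arguments. Unset Strict Implicit. Unset Printing Implicit Defensive.
Import Order.TTheory GRing.Theory Num.Theory.
Local Open Scope ring_scope.

(* The character lattice M of an n-dimensional torus: M = Z^n. *)
Notation lattice n := ('rV[int]_n).

Section Defs.
Variables (k : fieldType) (A : idomainType) (phi : {rmorphism k -> A}).

Definition fin_gen_alg : Prop :=
  exists s : seq A, forall a : A,
    exists r : seq (k * seq 'I_(size s)),
      a = \sum_(cl <- r) phi cl.1 * \prod_(i <- cl.2) s`_i.

Definition normal_domain : Prop :=
  forall x : {fraction A},
    (exists2 p : {poly A}, p \is monic & root (map_poly (@tofrac A) p) x) ->
    exists a : A, x = @tofrac A a.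

(* An M-grading A = (+)_m A_m, given by the family of projections
   pi m : A -> A_m (so A_m = { a | pi m a = a }). *)
Definition is_grading n (pi : lattice n -> A -> A) : Prop :=
  [/\ (forall m a b, pi m (a + b) = pi m a + pi m b),
      (forall m c a, pi m (phi c * a) = phi c * pi m a),
      (forall m m' a, pi m (pi m' a) = if m == m' then pi m' a else 0),
      (forall a, exists2 s : seq (lattice n), uniq s &
          (forall m, m \notin s -> pi m a = 0) /\ a = \sum_(m <- s) pi m a) &
      (forall m1 m2 a b, pi m1 a = a -> pi m2 b = b ->
          pi (m1 + m2) (a * b) = a * b)].

Definition homogeneous n (pi : lattice n -> A -> A) (m : lattice n) (a : A) :=
  pi m a = a.

(* The torus action is effective: the weights m with A_m <> 0 generate M. *)
Definition effective_grading n (pi : lattice n -> A -> A) : Prop :=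
  forall m : lattice n, exists r : seq (int * lattice n),
    (forall zw, zw \in r -> exists a, pi zw.2 a != 0) /\
    m = \sum_(zw <- r) zw.2 *~ zw.1.

Definition is_derivation (D : A -> A) : Prop :=
  [/\ (forall a b, D (a + b) = D a + D b),
      (forall c a, D (phi c * a) = phi c * D a) &
      (forall a b, D (a * b) = D a * b + a * D b)].

Definition locally_nilpotent (D : A -> A) : Prop :=
  forall a, exists N : nat, iter N D a = 0.

Definition homogeneous_der n (pi : lattice n -> A -> A) (e : lattice n)
    (D : A -> A) : Prop :=
  forall m a, homogeneous pi m a -> homogeneous pi (m + e) (D a).

(* Fiber type: the extension of D to K = Frac A (given by
   D(f/g) = (D f * g - f * D g)/g^2) kills k(X)^T, the field of invariant
   rational functions, i.e. the quotients f/g of homogeneous f, g of the same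
   degree (g <> 0). *)
Definition fiber_type n (pi : lattice n -> A -> A) (D : A -> A) : Prop :=
  (exists e, homogeneous_der pi e D) /\ locally_nilpotent D /\
  forall m f g, homogeneous pi m f -> homogeneous pi m g -> g != 0 ->
    D f * g - f * D g = 0.

Definition der_add (D1 D2 : A -> A) : A -> A := fun a => D1 a + D2 a.
Definition der_bracket (D1 D2 : A -> A) : A -> A :=
  fun a => D1 (D2 a) - D2 (D1 a).

End Defs.

(* Let D be a nonzero homogeneous locally nilpotent derivation of fiber type
   and nu(x) the largest j with D^j x <> 0.  The fiber type condition says
   that the logarithmic derivative D x / x in K = Frac A only depends on the
   degree of a homogeneous x; it is also additive in that degree.  Comparing
   x with D x yields D x = nu(x) c x in K for a constant c <> 0, so (k having
   characteristic 0) nu is additive in the degree and every homogeneous map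
   shifts it by a constant.  For two such derivations let a be the shift of
   nu1 under D2 and b the shift of nu2 under D1.  Then b >= 0 implies a >= 0,
   and a, b < 0 forces a = b = -1.  Up to symmetry there remain two regimes:
   - a <= 0: the bracket lowers nu1, and the sum lowers nu1 (a = -1) or
     (b + 1) nu1 + nu2 (a = 0), so both are locally nilpotent;
   - a, b > 0: the bracket acts on a suitable element by a nonzero integer
     weight that never decreases, and (D1 + D2)^N u keeps a nonzero
     homogeneous component, since all words in D1, D2 contribute natural
     multiples of one monomial in K; so neither is locally nilpotent. *)

From HB Require Import structures.
From mathcomp Require Import all_boot all_order all_algebra.
From mathcomp Require Import fraction.
From mathcomp Require Import zify ring.
Import Order.TTheory GRing.Theory Num.Theory.
Set Implicit Arguments. Unset Strict Implicit. Unset Printing Implicit Defensive.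
Local Open Scope ring_scope.

Section Grading.
Variables (k : fieldType) (A : idomainType) (phi : {rmorphism k -> A}).
Variables (n : nat) (pi : lattice n -> A -> A).
Hypothesis hgr : is_grading phi pi.
Hypothesis hchar : [pchar k] =i pred0.

Local Notation K := {fraction A}.
Local Notation "x %:F" := (@tofrac A x).
Local Notation hom := (homogeneous pi).

Lemma piD m x y : pi m (x + y) = pi m x + pi m y.
Proof. by case: hgr. Qed.

Lemma pi0 m : pi m 0 = 0.
Proof. by apply: (addIr (pi m 0)); rewrite -piD !add0r. Qed.

Lemma hom0 m : hom m 0.
Proof. exact: pi0. Qed.

Lemma homD m x y : hom m x -> hom m y -> hom m (x + y).
Proof. by rewrite /homogeneous piD => -> ->. Qed.

Lemma homN m x : hom m x -> hom m (- x).
Proof.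
move=> hx; apply: (addrI x); rewrite -{1}hx -piD !addrN; exact: pi0.
Qed.

Lemma homM m1 m2 x y : hom m1 x -> hom m2 y -> hom (m1 + m2) (x * y).
Proof. by case: hgr => _ _ _ _; apply. Qed.

Lemma hom_pi m x : hom m (pi m x).
Proof. by case: hgr => _ _ h _ _; rewrite /homogeneous h eqxx. Qed.

Lemma pi_hom m m' x : hom m' x -> pi m x = if m == m' then x else 0.
Proof. by case: hgr => _ _ h _ _ hx; rewrite -hx h hx. Qed.

Lemma decomposition x : exists s : seq (lattice n), x = \sum_(m <- s) pi m x.
Proof. by case: hgr => _ _ _ h _; have [s _ [_ hx]] := h x; exists s. Qed.

Definition additive_map (T : A -> A) : Prop := forall x y, T (x + y) = T x + T y.

Section Additive.
Variable T : A -> A.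
Hypothesis Tadd : additive_map T.

Lemma additive0 : T 0 = 0.
Proof. by apply: (addIr (T 0)); rewrite -Tadd !add0r. Qed.

Lemma additiveN x : T (- x) = - T x.
Proof. by apply: (addIr (T x)); rewrite -Tadd !addNr additive0. Qed.

Lemma additive_sum (I : Type) (s : seq I) (F : I -> A) :
  T (\sum_(i <- s) F i) = \sum_(i <- s) T (F i).
Proof. exact: (big_morph _ Tadd additive0). Qed.

Lemma iter_additive N : additive_map (iter N T).
Proof. by elim: N => [//|N IH] x y /=; rewrite IH Tadd. Qed.

Lemma iter0 N : iter N T 0 = 0.
Proof. by elim: N => //= N ->; rewrite additive0. Qed.

Lemma lnd_of_homogeneous :
  (forall m x, hom m x -> exists N, iter N T x = 0) -> locally_nilpotent T.
Proof.
move=> H x; have [s ->] := decomposition x.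
elim: s => [|m s [N IH]]; first by exists 0%N; rewrite big_nil.
have [M hM] := H m (pi m x) (hom_pi m x).
exists (maxn N M); rewrite big_cons iter_additive.
have vanish y j : iter j T y = 0 -> (j <= maxn N M)%N -> iter (maxn N M) T y = 0.
  by move=> hy hj; rewrite -(subnK hj) iterD hy iter0.
by rewrite (vanish _ _ hM (leq_maxr _ _)) (vanish _ _ IH (leq_maxl _ _)) addr0.
Qed.
End Additive.

Lemma lnd_by_potential (T1 T2 : A -> A) (f1 f2 : lattice n) (B : A -> nat) :
  additive_map T1 -> additive_map T2 ->
  homogeneous_der pi f1 T1 -> homogeneous_der pi f2 T2 ->
  (forall m x, hom m x -> T1 x != 0 -> (B (T1 x) < B x)%N) ->
  (forall m x, hom m x -> T2 x != 0 -> (B (T2 x) < B x)%N) ->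
  locally_nilpotent (fun x => T1 x + T2 x).
Proof.
move=> add1 add2 h1 h2 dec1 dec2.
have Tadd : additive_map (fun x => T1 x + T2 x).
  by move=> x y; rewrite add1 add2 addrACA.
suff H N m x : hom m x -> (B x < N)%N -> iter N (fun x => T1 x + T2 x) x = 0.
  by apply: lnd_of_homogeneous => // m x hx; exists (B x).+1; apply: (H _ m).
elim: N m x => [//|N IH] m x hx hB.
rewrite iterSr iter_additive //.
have killed (T : A -> A) f : homogeneous_der pi f T ->
    (forall m x, hom m x -> T x != 0 -> (B (T x) < B x)%N) ->
    iter N (fun x => T1 x + T2 x) (T x) = 0.
  move=> hT decT; have [->|nz] := eqVneq (T x) 0; first exact: iter0.
  by apply: (IH (m + f)); [apply: hT | apply: leq_trans (decT _ _ hx nz) _].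
by rewrite (killed _ _ h1 dec1) (killed _ _ h2 dec2) addr0.
Qed.

Lemma lnd_ext (T1 T2 : A -> A) :
  T1 =1 T2 -> locally_nilpotent T1 -> locally_nilpotent T2.
Proof. by move=> h hl x; have [N hN] := hl x; exists N; rewrite -(eq_iter h). Qed.

Lemma lnd_opp (T : A -> A) : additive_map T ->
  locally_nilpotent T -> locally_nilpotent (fun x => - T x).
Proof.
move=> Tadd hl x; have [N hN] := hl x; exists N.
suff -> : iter N (fun x => - T x) x = (-1) ^+ N * iter N T x by rewrite hN mulr0.
have Tsign j y : T ((-1) ^+ j * y) = (-1) ^+ j * T y.
  by rewrite -signr_odd; case: (odd j); rewrite ?mulN1r ?mul1r ?additiveN.
by elim: N {hN} => [|N /= ->]; rewrite ?mul1r // Tsign exprS mulN1r mulNr.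
Qed.

Lemma lnd_add_sym (D1 D2 : A -> A) :
  locally_nilpotent (der_add D1 D2) -> locally_nilpotent (der_add D2 D1).
Proof. by apply: lnd_ext => x; rewrite /der_add addrC. Qed.

Lemma lnd_bracket_sym (D1 D2 : A -> A) : additive_map D1 -> additive_map D2 ->
  locally_nilpotent (der_bracket D1 D2) -> locally_nilpotent (der_bracket D2 D1).
Proof.
move=> h1 h2 /lnd_opp hl; apply: lnd_ext (hl _) => [x|x y]; first by rewrite opprB.
by rewrite /der_bracket h1 h2 h1 h2 opprD addrACA.
Qed.

Lemma natK_eq0 (N : nat) : ((N%:R : K) == 0) = (N == 0%N).
Proof.
rewrite -(rmorph_nat (@tofrac A)) tofrac_eq0 -(rmorph_nat phi) fmorph_eq0.
by move/pcharf0P: hchar => ->.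
Qed.

Lemma natK_inj (N M : nat) : (N%:R : K) = M%:R -> N = M.
Proof.
wlog le_NM : N M / (N <= M)%N => [hw|] h.
  by case: (leqP N M) => [/hw|/ltnW/hw]; [apply | move=> ->].
have : ((M - N)%N%:R : K) == 0 by rewrite natrB // h subrr.
by rewrite natK_eq0 subn_eq0 => ?; apply/eqP; rewrite eqn_leq le_NM.
Qed.

Lemma intK_eq0 (z : int) : ((z%:~R : K) == 0) = (z == 0).
Proof.
case: z => p; first exact: natK_eq0.
by rewrite NegzE mulrNz oppr_eq0 [_%:~R]/(_%:R) natK_eq0.
Qed.

(* y is a natural multiple of X in K. Such multiples cannot cancel; this is
   what prevents the words of (D1 + D2)^N u from cancelling each other. *)
Definition natmul (X : K) (y : A) : Prop := exists p : nat, y%:F = p%:R * X.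

Lemma natmul0 X : natmul X 0.
Proof. by exists 0%N; rewrite tofrac0 mul0r. Qed.

Lemma natmul_add X y z : natmul X y -> natmul X z -> natmul X (y + z).
Proof.
by move=> [p hp] [q hq]; exists (p + q)%N; rewrite tofracD hp hq natrD mulrDl.
Qed.

Lemma natmul_add_eq0 X y z : X != 0 -> natmul X y -> natmul X z ->
  (y + z == 0) = (y == 0) && (z == 0).
Proof.
move=> nX [p hp] [q hq].
rewrite -[y + z == 0]tofrac_eq0 -[y == 0]tofrac_eq0 -[z == 0]tofrac_eq0.
rewrite tofracD hp hq -mulrDl -natrD.
by rewrite !mulf_eq0 (negbTE nX) !orbF !natK_eq0 addn_eq0.
Qed.

Record fiber_lnd := FiberLnd {
  der : A -> A;
  der_deg : lattice n;
  der_derivation : is_derivation phi der;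
  der_homogeneous : homogeneous_der pi der_deg der;
  der_fiber : forall m f g, hom m f -> hom m g -> g != 0 ->
    der f * g - f * der g = 0;
  der_lnd : locally_nilpotent der;
  probe : A;
  probe_deg : lattice n;
  probe_hom : hom probe_deg probe;
  probe_active : der probe != 0 }.

Section FiberLnd.
Variable F : fiber_lnd.
Local Notation D := (der F).
Local Notation e := (der_deg F).
Local Notation u := (probe F).

Lemma derD : additive_map D. Proof. by case: (der_derivation F). Qed.
Lemma derM x y : D (x * y) = D x * y + x * D y.
Proof. by case: (der_derivation F). Qed.
Lemma der0 : D 0 = 0. Proof. exact: additive0 derD. Qed.

Lemma hom_der m x : hom m x -> hom (m + e) (D x).
Proof. exact: der_homogeneous. Qed.

Lemma hom_iter m x j : hom m x -> hom (m + e *+ j) (iter j D x).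
Proof.
move=> hx; elim: j => [|j IH]; first by rewrite addr0.
by rewrite iterS mulrSr addrA; apply: hom_der.
Qed.

Lemma probe_neq0 : u != 0.
Proof. by apply: contraNneq (probe_active F) => ->; rewrite der0. Qed.

(* The logarithmic derivative D x / x in K. It is additive on products, and
   the fiber type condition says exactly that it only depends on the degree. *)
Definition logder x : K := (D x)%:F / x%:F.

Lemma logderM x y : x != 0 -> y != 0 -> logder (x * y) = logder x + logder y.
Proof.
move=> nx ny; rewrite /logder derM tofracD !tofracM.
by rewrite addf_div ?tofrac_eq0 // [_ * x%:F]mulrC.
Qed.

Lemma logder_deg m x y : hom m x -> hom m y -> x != 0 -> y != 0 ->
  logder x = logder y.
Proof.
move=> hx hy nx ny; have /eqP := der_fiber F hx hy ny; rewrite subr_eq0 => /eqP h.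
by rewrite /logder; apply/eqP; rewrite eqr_div ?tofrac_eq0 // -!tofracM h mulrC.
Qed.

Lemma logder_balanced m1 m2 m3 m4 x1 x2 x3 x4 :
  hom m1 x1 -> hom m2 x2 -> hom m3 x3 -> hom m4 x4 -> m1 + m2 = m3 + m4 ->
  x1 != 0 -> x2 != 0 -> x3 != 0 -> x4 != 0 ->
  logder x1 + logder x2 = logder x3 + logder x4.
Proof.
move=> h1 h2 h3 h4 hm n1 n2 n3 n4; rewrite -!logderM //.
by apply: (logder_deg (homM h1 h2)); rewrite ?hm ?mulf_neq0 //; apply: homM.
Qed.

(* The constant by which one application of D lowers logder. *)
Definition lstep : K := logder u - logder (D u).

Lemma logder_der m x : hom m x -> x != 0 -> D x != 0 ->
  logder (D x) = logder x - lstep.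
Proof.
move=> hx nx nDx; have hm : m + e + probe_deg F = m + (probe_deg F + e).
  by rewrite addrAC -addrA.
have := logder_balanced (hom_der hx) (probe_hom F) hx (hom_der (probe_hom F)) hm
  nDx probe_neq0 nx (probe_active F).
by rewrite /lstep => h; apply: (addIr (logder u)); rewrite h opprB addrA subrK.
Qed.

(* The D-degree of x: the largest j with D^j x <> 0 (and 0 for x = 0). *)
Lemma lnd_exists x : exists N, iter N D x == 0.
Proof. by have [N hN] := der_lnd F x; exists N; apply/eqP. Qed.

Definition nu x : nat := (ex_minn (lnd_exists x)).-1.

Lemma logder_nu m x : hom m x -> x != 0 -> logder x = (nu x)%:R * lstep.
Proof.
move=> hx nx; rewrite /nu; case: ex_minnP => N /eqP hN hmin.
case: N hN hmin => [|N] hN hmin; first by move: nx; rewrite -[x]/(iter 0 D x) hN eqxx.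
have iter_der j : (j <= N)%N -> logder (iter j D x) = logder x - j%:R * lstep.
  elim: j => [|j IH] hj; first by rewrite mul0r subr0.
  have nz i : (i <= N)%N -> iter i D x != 0.
    by move=> hi; apply/negP => /hmin; rewrite leqNgt ltnS hi.
  rewrite iterS (logder_der (hom_iter _ hx) (nz j (ltnW hj)) (nz j.+1 hj)).
  by rewrite (IH (ltnW hj)) mulrSr mulrDl mul1r -addrA -opprD.
have := iter_der N (leqnn N); rewrite /logder -iterS hN tofrac0 mul0r.
by move/eqP; rewrite eq_sym subr_eq0 => /eqP.
Qed.

Lemma der_nu m x : hom m x -> (D x)%:F = (nu x)%:R * lstep * x%:F.
Proof.
move=> hx; have [->|nx] := eqVneq x 0; first by rewrite der0 tofrac0 mulr0.
by rewrite -(logder_nu hx nx) /logder divfK // tofrac_eq0.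
Qed.

Lemma lstep_neq0 : lstep != 0.
Proof.
apply: contraNneq (probe_active F) => c0; rewrite -tofrac_eq0.
by rewrite (der_nu (probe_hom F)) c0 mulr0 mul0r.
Qed.

Lemma der_eq0 m x : hom m x -> x != 0 -> (D x == 0) = (nu x == 0%N).
Proof.
move=> hx nx; rewrite -tofrac_eq0 (der_nu hx) !mulf_eq0 natK_eq0.
by rewrite (negbTE lstep_neq0) tofrac_eq0 (negbTE nx) !orbF.
Qed.

Lemma nu_balanced m1 m2 m3 m4 x1 x2 x3 x4 :
  hom m1 x1 -> hom m2 x2 -> hom m3 x3 -> hom m4 x4 -> m1 + m2 = m3 + m4 ->
  x1 != 0 -> x2 != 0 -> x3 != 0 -> x4 != 0 ->
  (nu x1 + nu x2 = nu x3 + nu x4)%N.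
Proof.
move=> h1 h2 h3 h4 hm n1 n2 n3 n4.
have := logder_balanced h1 h2 h3 h4 hm n1 n2 n3 n4.
rewrite !(logder_nu h1, logder_nu h2, logder_nu h3, logder_nu h4) //.
by rewrite -!mulrDl -!natrD => /(mulIf lstep_neq0)/natK_inj.
Qed.

Lemma nu_deg m x y : hom m x -> hom m y -> x != 0 -> y != 0 -> nu x = nu y.
Proof.
move=> hx hy nx ny.
have := nu_balanced hx (probe_hom F) hy (probe_hom F) erefl nx probe_neq0 ny
  probe_neq0.
by move/eqP; rewrite eqn_add2r => /eqP.
Qed.

Lemma nu_der m x : hom m x -> D x != 0 -> nu x = (nu (D x)).+1.
Proof.
move=> hx nDx; have nx : x != 0 by apply: contraNneq nDx => ->; rewrite der0.
have := logder_der hx nx nDx; rewrite (logder_nu (hom_der hx)) // (logder_nu hx) //.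
move=> h; apply: natK_inj; rewrite -addn1 natrD; apply: (mulIf lstep_neq0).
by rewrite mulrDl h mul1r subrK.
Qed.

Lemma nu_shift (T : A -> A) f m x my y :
  homogeneous_der pi f T -> hom m x -> hom my y ->
  x != 0 -> y != 0 -> T x != 0 -> T y != 0 ->
  (nu (T x) + nu y = nu x + nu (T y))%N.
Proof.
move=> hT hx hy nx ny nTx nTy.
by apply: (nu_balanced (hT _ _ hx) hy hx (hT _ _ hy)); rewrite // addrAC -addrA.
Qed.

Lemma natmul_der X m y : hom m y -> natmul X y -> natmul (lstep * X) (D y).
Proof.
move=> hy [p hp]; exists (nu y * p)%N.
by rewrite (der_nu hy) hp natrM; ring.
Qed.

Lemma nu_probe_pos : (0 < nu (probe F))%N.
Proof. by rewrite (nu_der (probe_hom F) (probe_active F)). Qed.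
End FiberLnd.

(* The constant change of the F-degree under one application of der G. *)
Definition shift (F G : fiber_lnd) : int :=
  (nu F (der G (probe G)))%:Z - (nu F (probe G))%:Z.

Lemma nu_shift_law (F G : fiber_lnd) m x : hom m x -> x != 0 -> der G x != 0 ->
  (nu F (der G x))%:Z = (nu F x)%:Z + shift F G.
Proof.
move=> hx nx nGx.
have := nu_shift F (der_homogeneous G) hx (probe_hom G) nx (probe_neq0 G) nGx
  (probe_active G).
by rewrite /shift; lia.
Qed.

Section Pair.
Variables F1 F2 : fiber_lnd.
Local Notation D1 := (der F1).
Local Notation D2 := (der F2).
Local Notation e1 := (der_deg F1).
Local Notation e2 := (der_deg F2).
Local Notation nu1 := (nu F1).
Local Notation nu2 := (nu F2).
Local Notation a := (shift F1 F2).
Local Notation b := (shift F2 F1).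

Lemma iter_der1 j m x : hom m x -> x != 0 -> (j <= nu1 x)%N ->
  [/\ iter j D1 x != 0, (nu1 (iter j D1 x) + j)%N = nu1 x &
      (nu2 (iter j D1 x))%:Z = (nu2 x)%:Z + j%:Z * b].
Proof.
move=> hx nx; elim: j => [|j IH] hj; first by split; rewrite ?addn0 ?mul0r ?addr0.
have [nz h1 h2] := IH (ltnW hj); have hy := hom_iter F1 j hx.
have nD : D1 (iter j D1 x) != 0 by rewrite (der_eq0 F1 hy nz); lia.
have := nu_der hy nD; have := nu_shift_law F2 hy nz nD.
by rewrite iterS; split => //; lia.
Qed.

(* If b >= 0, killing u2 by D1 produces an element of ker D1 not in ker D2. *)
Lemma ker_der1_elem : 0 <= b ->
  exists m y, [/\ hom m y, y != 0, nu1 y = 0%N & (0 < nu2 y)%N].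
Proof.
move=> hb; have hu2 := probe_hom F2.
have [nz h1 h2] := iter_der1 hu2 (probe_neq0 F2) (leqnn (nu1 (probe F2))).
exists (probe_deg F2 + e1 *+ nu1 (probe F2)), (iter (nu1 (probe F2)) D1 (probe F2)).
by split; [exact: hom_iter | | lia | have := nu_probe_pos F2; nia].
Qed.

Lemma shift_nonneg : 0 <= b -> 0 <= a.
Proof.
move=> hb; have [m [y [hy ny h1 h2]]] := ker_der1_elem hb.
have nD : D2 y != 0 by rewrite (der_eq0 F2 hy ny); lia.
by have := nu_shift_law F1 hy ny nD; rewrite h1; lia.
Qed.

(* If b < 0, applying D1 nu1(x) times to x costs nu1(x) (-b) of nu2(x). *)
Lemma shift_neg_bound m x : b < 0 -> hom m x -> x != 0 ->
  (nu1 x)%:Z * (- b) <= (nu2 x)%:Z.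
Proof.
move=> hb hx nx; have [_ _ h2] := iter_der1 hx nx (leqnn (nu1 x)).
by have : 0 <= (nu2 (iter (nu1 x) D1 x))%:Z by []; rewrite h2; nia.
Qed.

Lemma shift_same_deg : e1 = e2 -> a = -1.
Proof.
move=> he; have hu1 := probe_hom F1; have hu2 := probe_hom F2.
have hm : probe_deg F2 + e2 + probe_deg F1 = probe_deg F2 + (probe_deg F1 + e1).
  by rewrite he addrAC addrA.
have := nu_balanced F1 (hom_der F2 hu2) hu1 hu2 (hom_der F1 hu1) hm
  (probe_active F2) (probe_neq0 F1) (probe_neq0 F2) (probe_active F1).
by have := nu_der hu1 (probe_active F1); rewrite /shift; lia.
Qed.

Lemma hom_der12 m x : hom m x -> hom (m + e1 + e2) (D1 (D2 x)).
Proof. by move=> hx; rewrite addrAC; do 2 apply: hom_der. Qed.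

Lemma hom_der21 m x : hom m x -> hom (m + e1 + e2) (D2 (D1 x)).
Proof. by move=> hx; do 2 apply: hom_der. Qed.

Lemma nu_after_both m x z : hom m x -> hom (m + e1 + e2) z -> z != 0 ->
  D1 (D2 x) != 0 \/ D2 (D1 x) != 0 ->
  (nu1 z)%:Z = (nu1 x)%:Z + a - 1 /\ (nu2 z)%:Z = (nu2 x)%:Z + b - 1.
Proof.
move=> hx hz nz [nw|nw].
- have nD : D2 x != 0 by apply: contraNneq nw => ->; rewrite der0.
  have nx : x != 0 by apply: contraNneq nD => ->; rewrite der0.
  have hx2 := hom_der F2 hx.
  rewrite (nu_deg F1 hz (hom_der12 hx) nz nw) (nu_deg F2 hz (hom_der12 hx) nz nw).
  have := nu_der hx2 nw; have := nu_shift_law F1 hx nx nD.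
  have := nu_der hx nD; have := nu_shift_law F2 hx2 nD nw; lia.
- have nD : D1 x != 0 by apply: contraNneq nw => ->; rewrite der0.
  have nx : x != 0 by apply: contraNneq nD => ->; rewrite der0.
  have hx1 := hom_der F1 hx.
  rewrite (nu_deg F1 hz (hom_der21 hx) nz nw) (nu_deg F2 hz (hom_der21 hx) nz nw).
  have := nu_der hx nD; have := nu_shift_law F1 hx1 nD nw.
  have := nu_der hx1 nw; have := nu_shift_law F2 hx nx nD; lia.
Qed.

(* If a <= 0, both terms of [D1, D2] lower nu1. *)
Lemma bracket_lnd : a <= 0 -> locally_nilpotent (der_bracket D1 D2).
Proof.
move=> ha; have add1 : additive_map (fun x => D1 (D2 x)) by move=> x y; rewrite !derD.
have add2 : additive_map (fun x => - D2 (D1 x)) by move=> x y; rewrite !derD opprD.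
apply: (lnd_by_potential add1 add2 (B := nu1)
  (f1 := e2 + e1) (f2 := e1 + e2)).
- by move=> m x hx; rewrite addrA; do 2 apply: hom_der.
- by move=> m x hx; apply/homN; rewrite addrA; do 2 apply: hom_der.
- move=> m x hx nw; have [h1 _] := nu_after_both hx (hom_der12 hx) nw (or_introl nw).
  lia.
- move=> m x hx nw; have nw' : D2 (D1 x) != 0 by rewrite -oppr_eq0.
  have [h1 _] := nu_after_both hx (homN (hom_der21 hx)) nw (or_intror nw').
  lia.
Qed.

(* If a = -1, both D1 and D2 lower nu1. *)
Lemma sum_lnd_unit : a = -1 -> locally_nilpotent (der_add D1 D2).
Proof.
move=> ha; apply: (lnd_by_potential (derD F1) (derD F2) (B := nu1)
  (der_homogeneous F1) (der_homogeneous F2)) => m x hx nD.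
  by have := nu_der hx nD; lia.
have nx : x != 0 by apply: contraNneq nD => ->; rewrite der0.
by have := nu_shift_law F1 hx nx nD; lia.
Qed.

(* If a = 0 <= b, both D1 and D2 lower the potential (b + 1) nu1 + nu2. *)
Lemma sum_lnd_zero : a = 0 -> 0 <= b -> locally_nilpotent (der_add D1 D2).
Proof.
move=> ha hb; apply: (lnd_by_potential (derD F1) (derD F2)
  (B := fun x => (nu1 x * (absz b).+1 + nu2 x)%N)
  (der_homogeneous F1) (der_homogeneous F2)) => m x hx nD;
  have nx : x != 0 by apply: contraNneq nD => ->; rewrite der0.
  by have := nu_der hx nD; have := nu_shift_law F2 hx nx nD; nia.
by have := nu_der hx nD; have := nu_shift_law F1 hx nx nD; nia.
Qed.

Definition bracket_weight x : int := a * (nu2 x)%:Z - b * (nu1 x)%:Z.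

Lemma bracket_formula m x : hom m x -> (der_bracket D1 D2 x)%:F =
  (bracket_weight x)%:~R * (lstep F1 * lstep F2) * x%:F.
Proof.
move=> hx; have [->|nx] := eqVneq x 0.
  by rewrite /der_bracket !der0 subr0 tofrac0 mulr0.
have coef1 : (nu1 (D2 x) * nu2 x)%N%:Z = ((nu1 x)%:Z + a) * (nu2 x)%:Z.
  have [/eqP|nD] := eqVneq (D2 x) 0; last by have := nu_shift_law F1 hx nx nD; nia.
  by rewrite (der_eq0 F2 hx nx) => /eqP ->; rewrite muln0 mulr0.
have coef2 : (nu2 (D1 x) * nu1 x)%N%:Z = ((nu2 x)%:Z + b) * (nu1 x)%:Z.
  have [/eqP|nD] := eqVneq (D1 x) 0; last by have := nu_shift_law F2 hx nx nD; nia.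
  by rewrite (der_eq0 F1 hx nx) => /eqP ->; rewrite muln0 mulr0.
have -> : bracket_weight x = (nu1 (D2 x) * nu2 x)%N%:Z - (nu2 (D1 x) * nu1 x)%N%:Z.
  by rewrite coef1 coef2 /bracket_weight; ring.
rewrite /der_bracket tofracB (der_nu F1 (hom_der F2 hx)) (der_nu F2 (hom_der F1 hx)).
by rewrite !(der_nu _ hx) intrB -!pmulrn !natrM; ring.
Qed.

Lemma bracket_step m x : hom m x -> x != 0 -> bracket_weight x != 0 ->
  [/\ der_bracket D1 D2 x != 0, hom (m + e1 + e2) (der_bracket D1 D2 x) &
      bracket_weight (der_bracket D1 D2 x) = bracket_weight x + (b - a)].
Proof.
move=> hx nx nw.
have hT : hom (m + e1 + e2) (der_bracket D1 D2 x).
  by apply: homD; [apply: hom_der12 | apply/homN/hom_der21].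
have nT : der_bracket D1 D2 x != 0.
  rewrite -tofrac_eq0 (bracket_formula hx) !mulf_neq0 ?intK_eq0 ?lstep_neq0 //.
  by rewrite tofrac_eq0.
have one_nonzero : D1 (D2 x) != 0 \/ D2 (D1 x) != 0.
  case: (eqVneq (D1 (D2 x)) 0) => [h0|]; last by left.
  by right; apply: contraNneq nT => h1; rewrite /der_bracket h0 h1 subrr.
have [h1 h2] := nu_after_both hx hT nT one_nonzero.
by split => //; rewrite /bracket_weight h1 h2; ring.
Qed.

(* If 0 < a <= b, the bracket never kills an element of ker D1 \ ker D2. *)
Lemma bracket_not_lnd : 0 < a -> a <= b -> ~ locally_nilpotent (der_bracket D1 D2).
Proof.
move=> ha hab hl; have [m [y [hy ny h1 h2]]] := ker_der1_elem (le_trans (ltW ha) hab).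
suff alive N m' x : hom m' x -> x != 0 -> 0 < bracket_weight x ->
    iter N (der_bracket D1 D2) x != 0.
  have [N hN] := hl y; suff /(alive N m y hy ny) : 0 < bracket_weight y.
    by rewrite hN eqxx.
  by rewrite /bracket_weight h1; nia.
elim: N m' x => [//|N IH] m' x hx nx hw; rewrite iterSr.
have [nT hT hwT] := bracket_step hx nx (lt0r_neq0 hw).
by apply: (IH _ _ hT nT); rewrite hwT; lia.
Qed.

(* The component of (D1 + D2)^N u1 made of the words with i letters D1. *)
Fixpoint comp (N i : nat) : A :=
  match N with
  | 0 => if i == 0%N then probe F1 else 0
  | N'.+1 => (if i is i'.+1 then D1 (comp N' i') else 0) + D2 (comp N' i)
  end.

Definition comp_deg (N i : nat) : lattice n :=
  probe_deg F1 + e1 *+ i + e2 *+ (N - i).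

Lemma comp_big N i : (N < i)%N -> comp N i = 0.
Proof.
elim: N i => [|N IH] [|i] //= hi.
by rewrite !IH // ?der0 ?addr0 // ltnW.
Qed.

Lemma comp_deg_der1 N i : comp_deg N i + e1 = comp_deg N.+1 i.+1.
Proof. by rewrite /comp_deg subSS [in RHS]mulrSr [in RHS]addrA [in LHS]addrAC. Qed.

Lemma comp_deg_der2 N i : (i <= N)%N -> comp_deg N i + e2 = comp_deg N.+1 i.
Proof. by move=> hi; rewrite /comp_deg subSn // mulrSr addrA. Qed.

Lemma comp_hom N i : (i <= N)%N -> hom (comp_deg N i) (comp N i).
Proof.
elim: N i => [|N IH] [|i] //= hi.
- by rewrite /comp_deg !addr0; exact: probe_hom.
- rewrite add0r -comp_deg_der2 //; exact/hom_der/IH.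
apply: homD; first by rewrite -comp_deg_der1; exact/hom_der/IH.
case: (ltnP N i.+1) => hN; first by rewrite comp_big // der0; exact: hom0.
by rewrite -comp_deg_der2 //; exact/hom_der/IH.
Qed.

Lemma iter_comp N : iter N (der_add D1 D2) (probe F1) = \sum_(i < N.+1) comp N i.
Proof.
elim: N => [|N IH]; first by rewrite big_ord_recl big_ord0 /= addr0.
have addS : additive_map (der_add D1 D2).
  by move=> x y; rewrite /der_add !derD addrACA.
have sum1 : \sum_(j < N.+2) (if val j is i.+1 then D1 (comp N i) else 0) =
    \sum_(i < N.+1) D1 (comp N i) by rewrite big_ord_recl add0r.
have sum2 : \sum_(j < N.+2) D2 (comp N j) = \sum_(i < N.+1) D2 (comp N i).
  by rewrite big_ord_recr /= comp_big // der0 addr0.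
rewrite iterS IH (additive_sum addS) big_split -sum1 -sum2 -big_split.
by apply: eq_bigr => -[[|j] hj].
Qed.

Lemma comp_deg_inj N i j : e1 != e2 -> (i <= N)%N -> (j <= N)%N ->
  comp_deg N i = comp_deg N j -> i = j.
Proof.
move=> ne hi hj h; apply/eqP; apply: contraNT ne => nij; apply/eqP/matrixP => p q.
have := congr1 (fun M : lattice n => M p q) h; rewrite /comp_deg !mxE !mulmxnE.
set P := probe_deg F1 p q; set E1 := e1 p q; set E2 := e2 p q.
rewrite !pmulrn !mulrzz -!subzn // => hE.
have : (E1 - E2) * (i%:Z - j%:Z) == 0 by apply/eqP; nia.
by rewrite mulf_eq0 subr_eq0 => /orP[/eqP //|]; rewrite subr_eq0 eqz_nat (negbTE nij).
Qed.

Lemma pi_iter_comp N i : e1 != e2 -> (i <= N)%N ->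
  pi (comp_deg N i) (iter N (der_add D1 D2) (probe F1)) = comp N i.
Proof.
move=> ne hi; rewrite iter_comp (additive_sum (piD _)).
rewrite (bigD1 (Ordinal (hi : (i < N.+1)%N))) //= (pi_hom _ (comp_hom hi)) eqxx.
rewrite big1 ?addr0 // => j hj; have hjN : (j <= N)%N by rewrite -ltnS.
rewrite (pi_hom _ (comp_hom hjN)); case: eqP => // /(comp_deg_inj ne hi hjN) eij.
by case/negP: hj; apply/eqP/val_inj.
Qed.

Definition monomial (N i : nat) : K :=
  lstep F1 ^+ i * lstep F2 ^+ (N - i) * (probe F1)%:F.

Lemma monomial_neq0 N i : monomial N i != 0.
Proof.
by rewrite !mulf_neq0 ?expf_neq0 ?lstep_neq0 // tofrac_eq0 probe_neq0.
Qed.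

Lemma comp_hom_any N i : exists m, hom m (comp N i).
Proof.
case: (leqP i N) => hi; first by exists (comp_deg N i); apply: comp_hom.
by exists 0; rewrite comp_big //; apply: hom0.
Qed.

Lemma der1_comp_natmul N i : natmul (monomial N i) (comp N i) ->
  natmul (monomial N.+1 i.+1) (D1 (comp N i)).
Proof.
have -> : monomial N.+1 i.+1 = lstep F1 * monomial N i.
  by rewrite /monomial subSS exprS; ring.
by have [m hm] := comp_hom_any N i; apply: natmul_der F1 _ _ _ hm.
Qed.

Lemma der2_comp_natmul N i : natmul (monomial N i) (comp N i) ->
  natmul (monomial N.+1 i) (D2 (comp N i)).
Proof.
case: (ltnP N i) => hi; first by rewrite comp_big // der0 => _; apply: natmul0.
have -> : monomial N.+1 i = lstep F2 * monomial N i.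
  by rewrite /monomial subSn // exprS; ring.
exact: natmul_der F2 _ _ _ (comp_hom hi).
Qed.

Lemma comp_natmul N i : natmul (monomial N i) (comp N i).
Proof.
elim: N i => [|N IH] [|i] /=; last 2 first.
- by apply: natmul_add; [apply: natmul0 | apply/der2_comp_natmul/IH].
- by apply: natmul_add; [apply/der1_comp_natmul/IH | apply/der2_comp_natmul/IH].
- by exists 1%N; rewrite /monomial !expr0 !mul1r.
- exact: natmul0.
Qed.

(* Since all words contribute natural multiples of the same monomial, a
   nonzero word survives in the next component. *)
Lemma comp_grow N i :
  (D1 (comp N i) != 0 -> comp N.+1 i.+1 != 0) /\
  (D2 (comp N i) != 0 -> comp N.+1 i != 0).
Proof.
have nat1 j := der1_comp_natmul (comp_natmul N j).
have nat2 j := der2_comp_natmul (comp_natmul N j).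
split=> nz /=.
  by rewrite (natmul_add_eq0 (monomial_neq0 _ _) (nat1 i) (nat2 _)) negb_and nz.
case: i nz => [|i] nz /=; first by rewrite add0r.
by rewrite (natmul_add_eq0 (monomial_neq0 _ _) (nat1 i) (nat2 _)) negb_and nz orbT.
Qed.

(* If a, b > 0, some component of (D1 + D2)^N u1 stays nonzero: follow D2
   from elements of ker D1 and D1 otherwise; nu1 + nu2 stays positive. *)
Lemma comp_walk : 0 < a -> 0 < b -> forall N, exists i,
  [/\ (i <= N)%N, comp N i != 0 & (0 < nu1 (comp N i) + nu2 (comp N i))%N].
Proof.
move=> ha hb; elim=> [|N [i [hi nw hpos]]].
  by exists 0%N; split=> //=; [exact: probe_neq0 | have := nu_probe_pos F1; lia].
have hw := comp_hom hi; have [grow1 grow2] := comp_grow N i.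
case: (posnP (nu1 (comp N i))) => h1.
- have nD : D2 (comp N i) != 0 by rewrite (der_eq0 F2 hw nw); lia.
  have hD := hom_der F2 hw; rewrite comp_deg_der2 // in hD.
  have nW := grow2 nD; have hW := comp_hom (leqW hi).
  exists i; split => //; first exact: leqW.
  rewrite (nu_deg F1 hW hD nW nD) (nu_deg F2 hW hD nW nD).
  by have := nu_shift_law F1 hw nw nD; have := nu_der hw nD; lia.
- have nD : D1 (comp N i) != 0 by rewrite (der_eq0 F1 hw nw); lia.
  have hD := hom_der F1 hw; rewrite comp_deg_der1 in hD.
  have nW := grow1 nD; have hW := comp_hom (hi : (i.+1 <= N.+1)%N).
  exists i.+1; split => //.
  rewrite (nu_deg F1 hW hD nW nD) (nu_deg F2 hW hD nW nD).
  by have := nu_der hw nD; have := nu_shift_law F2 hw nw nD; lia.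
Qed.

(* If a, b > 0 then e1 <> e2, so (D1 + D2)^N u1 has the nonzero homogeneous
   component given by comp_walk. *)
Lemma sum_not_lnd : 0 < a -> 0 < b -> ~ locally_nilpotent (der_add D1 D2).
Proof.
move=> ha hb hl; have ne : e1 != e2 by apply/eqP => /shift_same_deg; lia.
have [N hN] := hl (probe F1); have [i [hi nw _]] := comp_walk ha hb N.
by move: nw; rewrite -(pi_iter_comp ne hi) hN pi0 eqxx.
Qed.
End Pair.

(* A negative shift is -1: then b < 0 as well, and the bounds of
   shift_neg_bound in both directions give a b <= 1. *)
Lemma shift_negative (F1 F2 : fiber_lnd) : shift F1 F2 < 0 -> shift F1 F2 = -1.
Proof.
move=> ha; have hb : shift F2 F1 < 0.
  by rewrite ltNge; apply: contraTN ha => /shift_nonneg; rewrite -leNgt.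
have hu := probe_hom F1; have nu0 := probe_neq0 F1.
have := shift_neg_bound hb hu nu0; have := shift_neg_bound ha hu nu0.
by have := nu_probe_pos F1; nia.
Qed.

Lemma regime_lnd (F1 F2 : fiber_lnd) : shift F1 F2 <= 0 ->
  locally_nilpotent (der_add (der F1) (der F2)) /\
  locally_nilpotent (der_bracket (der F1) (der F2)).
Proof.
move=> ha; split; last exact: bracket_lnd.
case: (ltrP (shift F1 F2) 0) => [/shift_negative|ha']; first exact: sum_lnd_unit.
apply: sum_lnd_zero; first by apply/eqP; rewrite eq_le ha ha'.
exact: shift_nonneg.
Qed.

Lemma regime_not_lnd (F1 F2 : fiber_lnd) : 0 < shift F1 F2 -> 0 < shift F2 F1 ->
  ~ locally_nilpotent (der_add (der F1) (der F2)) /\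
  ~ locally_nilpotent (der_bracket (der F1) (der F2)).
Proof.
move=> ha hb; split; first exact: sum_not_lnd.
case: (lerP (shift F1 F2) (shift F2 F1)) => hab; first exact: bracket_not_lnd.
by move/(lnd_bracket_sym (derD F1) (derD F2)); apply: bracket_not_lnd => //; apply: ltW.
Qed.

Lemma fiber_lnd_of (D : A -> A) : is_derivation phi D -> (exists x, D x != 0) ->
  fiber_type pi D -> exists F : fiber_lnd, der F = D.
Proof.
move=> hD [x nx] [[e he] [hl hfib]].
have Dadd : additive_map D by case: hD.
have [s hs] := decomposition x.
have [m _ nDm] : exists2 m, m \in s & D (pi m x) != 0.
  apply/hasP; apply: contraNT nx => /hasPn hz; rewrite hs (additive_sum Dadd).
  by rewrite big1_seq // => m /hz; rewrite negbK => /eqP.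
by exists (FiberLnd hD he hfib hl (hom_pi m x) nDm).
Qed.
End Grading.

Theorem corollary6p1
  (k : closedFieldType) (hchar : [pchar k] =i pred0)
  (A : idomainType) (phi : {rmorphism k -> A})
  (hfg : fin_gen_alg phi) (hnormal : normal_domain A)
  (n : nat) (pi : lattice n -> A -> A)
  (hgr : is_grading phi pi) (heff : effective_grading pi)
  (D1 D2 : A -> A)
  (hD1 : is_derivation phi D1) (hD2 : is_derivation phi D2)
  (hD1nz : exists a, D1 a != 0) (hD2nz : exists a, D2 a != 0)
  (hft1 : fiber_type pi D1) (hft2 : fiber_type pi D2) :
  locally_nilpotent (der_add D1 D2) <-> locally_nilpotent (der_bracket D1 D2).
Proof.
have [F1 <-] := fiber_lnd_of hgr hD1 hD1nz hft1.
have [F2 <-] := fiber_lnd_of hgr hD2 hD2nz hft2.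
case: (lerP (shift F1 F2) 0) => [ha|ha].
  by have [? ?] := regime_lnd hgr hchar ha.
case: (lerP (shift F2 F1) 0) => [hb|hb].
  have [? ?] := regime_lnd hgr hchar hb.
  by split=> _; [apply: lnd_bracket_sym (derD F2) (derD F1) _ | apply: lnd_add_sym].
by have [? ?] := regime_not_lnd hgr hchar ha hb.
Qed.
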